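(* For finite sets $A, X \subset \mathbb{R}$ define the popular sums \[ P_A(X) = \left\{ y \in X+X : \sigma_X(y) \geq \frac{|X|^2}{8\,|X+X|\,\log|A|} \right\} \] and the rich set \[ R_A(X) = \left\{ x \in X : |(X+x)\cap P_A(X)| \geq \tfrac{3}{4}|X| \right\}. \] Then: (1) For every sufficiently large finite set $A\subset\mathbb{R}$, there exists $B \subset A$ with $|B| \geq \frac12 |A|$ such that \[ E_{\frac{12}{7}}(R_A(B)) \geq \frac{E_{\frac{12}{7}}(B)}{\log|A|}. \] (2) For such $A$ and $B$, there is $\Delta \in \mathbb{R}$ such that, defining \[ P_\Delta = \{ x : \delta_{R_A(B)}(x) \in [\Delta, 2\Delta)\}, \] we have \[ \Delta^{\frac{12}{7}}|P_\Delta| \approx E_{\frac{12}{7}}(R_A(B)) \approx E_{\frac{12}{7}}(B), \] and moreover \[ \Delta^2 |P_\Delta|^2 |B|^2 \ll E_3(B)\cdot \#\{(p_1,p_2,p_3) : p_1 - p_2 = p_3,\ p_1,p_2 \in P_A(B),\ p_3 \in P_\Delta\}. \]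
   Context: For finite $X\subset\mathbb{R}$: $X+X = \{x_1+x_2: x_i\in X\}$, $\sigma_X(y) = \#\{(x_1,x_2)\in X^2 : x_1+x_2 = y\}$, $\delta_X(x) = \#\{(x_1,x_2)\in X^2: x_1 - x_2 = x\}$, and for real $k \ge 1$, $E_k(X) = \sum_x \delta_X(x)^k$. Asymptotic notation is as $|A|\to\infty$: $F \ll G$ means $F = O(G)$ with an absolute constant; $F \lesssim G$ means $F \ll G (\log|A|)^{c}$ for some absolute constant $c$; $F \approx G$ means $F \lesssim G$ and $G \lesssim F$. *)

From HB Require Import structures.
From mathcomp Require Import all_boot all_order all_algebra finmap.
From mathcomp Require Import reals exp.
Set Implicit Arguments. Unset Strict Implicit. Unset Printing Implicit Defensive.
Import Order.TTheory GRing.Theory Num.Theory.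
Local Open Scope fset_scope.
Local Open Scope ring_scope.

Section AddComb.
Variable R : realType.
Implicit Types (X A : {fset R}) (x y : R).

Definition sumset X : {fset R} := [fset a + b | a : R in X, b : R in X].
Definition diffset X : {fset R} := [fset a - b | a : R in X, b : R in X].
Definition translate X x : {fset R} := [fset a + x | a : R in X].

Definition sigma X y : nat := (\sum_(a <- X) \sum_(b <- X) (a + b == y)%R)%N.
Definition delta X x : nat := (\sum_(a <- X) \sum_(b <- X) (a - b == x)%R)%N.

Definition energy (k : R) X : R :=
  \sum_(x <- diffset X) ((delta X x)%:R `^ k).

Definition popular A X : {fset R} :=
  [fset y in sumset X |
     ((#|` X|)%:R ^+ 2 : R) / (8 * (#|` sumset X|)%:R * ln (#|` A|)%:R)
       <= (sigma X y)%:R].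

Definition rich A X : {fset R} :=
  [fset x in X | (3 / 4 * (#|` X|)%:R : R) <= (#|` translate X x `&` popular A X|)%:R].

(* P_Delta = {x : delta_X(x) in [Delta, 2 Delta)} ; for Delta > 0 such x lie in X - X *)
Definition Pdelta X (D : R) : {fset R} :=
  [fset x in diffset X | (D <= (delta X x)%:R) && ((delta X x)%:R < 2 * D)].

Definition triples (P Q : {fset R}) : nat :=
  (\sum_(p1 <- P) \sum_(p2 <- P) \sum_(p3 <- Q) (p1 - p2 == p3)%R)%N.

End AddComb.

From HB Require Import structures.
From mathcomp Require Import all_boot all_order all_algebra finmap.
From mathcomp Require Import reals sequences exp.
From mathcomp Require Import ring lra.
Set Implicit Arguments. Unset Strict Implicit. Unset Printing Implicit Defensive.
Import Order.TTheory GRing.Theory Num.Theory.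
Local Open Scope fset_scope.
Local Open Scope ring_scope.

(* At most |X|^2 / (8 log|A|) pairs (x, b) in X^2 have an unpopular sum
   x + b (there are |X + X| candidate sums, each with fewer than
   |X|^2 / (8 |X + X| log|A|) representations), while each x outside R_A(X) accounts
   for at least |X| / 4 of them.  Hence R_A removes at most |X| / (2 log|A|) elements,
   and the iterates A, R_A(A), R_A(R_A(A)), ... keep |A| / 2 elements for log|A|
   steps.  If E_k dropped by a factor larger than log|A| at each of these steps, then
   (log|A|)^(log|A|) (|A|/2)^k <= E_k(A) <= |A|^(2+k), which is false for large |A|.

   Sorting the differences of R_A(B) by dyadic ranges of delta gives Delta
   at the price of the number of ranges, O(log|A|).  Any two rich r1, r2 have at least
   |B| / 2 common b in B with b + r1 and b + r2 popular, so Delta |P_Delta| |B| / 2 is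
   at most the number N of (b, p1, p2) with p1, p2 popular, p1 - b, p2 - b rich and
   p1 - p2 in P_Delta.  By Cauchy-Schwarz, N^2 is at most the number of triples times
   sum_(b, b' in B) delta_B(b - b')^2 = E_3(B). *)

Section IndicatorSums.
Context {R : numDomainType}.

Lemma natr_negb (b : bool) : (~~ b)%:R = 1 - b%:R :> R.
Proof. by case: b; rewrite ?subrr ?subr0. Qed.

Lemma natr_bool_le1 (b : bool) : b%:R <= 1 :> R.
Proof. by case: b. Qed.

Lemma big_indicator_eq (T : eqType) (s : seq T) (y : T) (F : T -> R) : uniq s ->
  \sum_(x <- s) (y == x)%:R * F x = (y \in s)%:R * F y.
Proof.
elim: s => [|a s IH] /=; first by rewrite big_nil mul0r.
case/andP=> /negbTE nas us; rewrite big_cons IH // in_cons.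
by have [->|_] := eqVneq y a; rewrite ?nas ?mul0r ?addr0 ?add0r.
Qed.

Lemma big_indicator_mem (T : eqType) (s : seq T) (y : T) : uniq s ->
  \sum_(x <- s) (y == x)%:R = (y \in s)%:R :> R.
Proof.
move=> us; rewrite -[RHS]mulr1 -(big_indicator_eq _ (fun=> 1)) //.
by apply: eq_bigr => x _; rewrite /= mulr1.
Qed.

Lemma ler_sum_seq (I : eqType) (r : seq I) (F G : I -> R) :
  {in r, forall i, F i <= G i} -> \sum_(i <- r) F i <= \sum_(i <- r) G i.
Proof. by move=> FG; rewrite big_seq [leRHS]big_seq; apply: ler_sum. Qed.

Context {T : choiceType}.
Implicit Types (X Y : {fset T}) (x : T).

Lemma ler_natr_mem X Y x : X `<=` Y -> (x \in X)%:R <= (x \in Y)%:R :> R.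
Proof. by move=> /fsubsetP XY; have [/XY ->|] := boolP (x \in X). Qed.

Lemma ler_sum_fsubset X Y (F : T -> R) : X `<=` Y -> {in Y, forall x, 0 <= F x} ->
  \sum_(x <- X) F x <= \sum_(x <- Y) F x.
Proof.
move=> XY F0; rewrite (eq_big_seq (fun x => if x \in X then F x else 0)); last by move=> x ->.
rewrite (big_fset_incl _ XY); last by move=> x _ /negbTE ->.
by apply: ler_sum_seq => x xY; case: ifP => // _; apply: F0.
Qed.

Lemma natr_card X : (#|` X|)%:R = \sum_(x <- X) 1 :> R.
Proof. by rewrite card_fset_sum1 natr_sum. Qed.

Lemma natr_card_fsubset X Y : Y `<=` X -> (#|` Y|)%:R = \sum_(x <- X) (x \in Y)%:R :> R.
Proof.
move=> YX; rewrite natr_card (eq_big_seq (fun x => (x \in Y)%:R)); last by move=> x ->.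
by rewrite (big_fset_incl _ YX) // => x _ /negbTE ->.
Qed.

End IndicatorSums.

(** * Representation functions and energies *)

Section Energy.
Variable R : realType.
Implicit Types (X Y : {fset R}) (a b x y k : R).

Lemma mem_diffset X a b : a \in X -> b \in X -> a - b \in diffset X.
Proof. by move=> aX bX; apply/imfset2P; exists a => //; exists b. Qed.

Lemma mem_sumset X a b : a \in X -> b \in X -> a + b \in sumset X.
Proof. by move=> aX bX; apply/imfset2P; exists a => //; exists b. Qed.

Lemma diffsetS X Y : X `<=` Y -> diffset X `<=` diffset Y.
Proof.
move=> /fsubsetP XY; apply/fsubsetP => _ /imfset2P [a aX [b bX ->]].
by apply: mem_diffset; apply: XY.
Qed.

Lemma natr_delta X x : (delta X x)%:R = \sum_(a <- X) \sum_(b <- X) (a - b == x)%:R :> R.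
Proof. by rewrite natr_sum; apply: eq_bigr => a _; rewrite natr_sum. Qed.

Lemma natr_sigma X y : (sigma X y)%:R = \sum_(a <- X) \sum_(b <- X) (a + b == y)%:R :> R.
Proof. by rewrite natr_sum; apply: eq_bigr => a _; rewrite natr_sum. Qed.

Lemma natr_triples (P Q : {fset R}) :
  (triples P Q)%:R = \sum_(p1 <- P) \sum_(p2 <- P) (p1 - p2 \in Q)%:R :> R.
Proof.
rewrite natr_sum; apply: eq_bigr => p1 _; rewrite natr_sum; apply: eq_bigr => p2 _.
by rewrite natr_sum big_indicator_mem.
Qed.

Lemma sum_pairs_diffset X (g : R -> R) :
  \sum_(a <- X) \sum_(b <- X) g (a - b) = \sum_(x <- diffset X) (delta X x)%:R * g x.
Proof.
under [RHS]eq_bigr => x _ do rewrite natr_delta mulr_suml.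
rewrite [RHS]exchange_big /=; apply: eq_big_seq => a aX.
under [RHS]eq_bigr => x _ do rewrite mulr_suml.
rewrite [RHS]exchange_big /=; apply: eq_big_seq => b bX.
by rewrite big_indicator_eq ?fset_uniq // mem_diffset // mul1r.
Qed.

Lemma sum_pairs_sumset X (g : R -> R) :
  \sum_(a <- X) \sum_(b <- X) g (a + b) = \sum_(y <- sumset X) (sigma X y)%:R * g y.
Proof.
under [RHS]eq_bigr => y _ do rewrite natr_sigma mulr_suml.
rewrite [RHS]exchange_big /=; apply: eq_big_seq => a aX.
under [RHS]eq_bigr => y _ do rewrite mulr_suml.
rewrite [RHS]exchange_big /=; apply: eq_big_seq => b bX.
by rewrite big_indicator_eq ?fset_uniq // mem_sumset // mul1r.
Qed.

Lemma natr_delta_row X x :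
  (delta X x)%:R = \sum_(a <- X) (a - x \in X)%:R :> R.
Proof.
rewrite natr_delta; apply: eq_bigr => a _.
rewrite -big_indicator_mem ?fset_uniq //; apply: eq_bigr => b _.
by rewrite (_ : (a - b == x) = (a - x == b)) //; apply/eqP/eqP => <-; ring.
Qed.

Lemma natr_delta_col X x :
  (delta X x)%:R = \sum_(b <- X) (b + x \in X)%:R :> R.
Proof.
rewrite natr_delta exchange_big; apply: eq_bigr => b _.
rewrite -big_indicator_mem ?fset_uniq //; apply: eq_bigr => a _.
by rewrite (_ : (a - b == x) = (b + x == a)) //; apply/eqP/eqP => <-; ring.
Qed.

Lemma delta_le_card X x : (delta X x <= #|` X|)%N.
Proof.
rewrite -(ler_nat R) natr_delta_row natr_card.
by apply: ler_sum => a _; apply: natr_bool_le1.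
Qed.

Lemma delta0 X : delta X 0 = #|` X|.
Proof.
apply/eqP; rewrite -(eqr_nat R) natr_delta_row natr_card; apply/eqP.
by apply: eq_big_seq => a aX; rewrite subr0 aX.
Qed.

Lemma delta_gt0 X x : x \in diffset X -> (0 < delta X x)%N.
Proof.
case/imfset2P => a aX [b bX ->]; rewrite -(ltr0n R) natr_delta_row (big_fsetD1 a aX) /=.
rewrite (_ : a - (a - b) = b) ?bX; last by ring.
by apply: ltr_wpDr => //; apply: sumr_ge0.
Qed.

Lemma leq_delta X Y x : X `<=` Y -> (delta X x <= delta Y x)%N.
Proof.
move=> XY; rewrite -(ler_nat R) !natr_delta.
apply: le_trans (_ : _ <= \sum_(a <- X) \sum_(b <- Y) (a - b == x)%:R) _.
  by apply: ler_sum => a _; apply: ler_sum_fsubset.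
by apply: ler_sum_fsubset => // a _; apply: sumr_ge0.
Qed.

Lemma sum_delta X : \sum_(x <- diffset X) (delta X x)%:R = (#|` X|)%:R ^+ 2 :> R.
Proof.
under eq_bigr do rewrite -[_%:R]mulr1.
rewrite -(sum_pairs_diffset X (fun=> 1)) natr_card expr2 mulr_suml.
by apply: eq_bigr => a _; rewrite mul1r.
Qed.

Lemma energy_ge0 k X : 0 <= energy k X.
Proof. by apply: sumr_ge0 => x _; apply: powR_ge0. Qed.

Lemma le_energy k X Y : 0 <= k -> X `<=` Y -> energy k X <= energy k Y.
Proof.
move=> k0 XY; rewrite /energy.
apply: le_trans (_ : _ <= \sum_(x <- diffset X) (delta Y x)%:R `^ k) _.
  by apply: ler_sum => x _; apply: ge0_ler_powR; rewrite ?nnegrE ?ler_nat ?leq_delta.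
apply: ler_sum_fsubset; first exact: diffsetS.
by move=> x _; apply: powR_ge0.
Qed.

Lemma energy_le_card k X : 0 <= k ->
  energy k X <= (#|` X|)%:R ^+ 2 * (#|` X|)%:R `^ k.
Proof.
move=> k0; rewrite -sum_delta mulr_suml; apply: ler_sum_seq => x xX.
apply: le_trans (_ : _ <= (#|` X|)%:R `^ k) _.
  by apply: ge0_ler_powR; rewrite ?nnegrE ?ler_nat ?delta_le_card.
by rewrite ler_peMl ?powR_ge0 // ler1n delta_gt0.
Qed.

Lemma card_le_energy k X : (0 < #|` X|)%N -> (#|` X|)%:R `^ k <= energy k X.
Proof.
case: (fset_0Vmem X) => [->|[a aX] _]; first by rewrite cardfs0.
have X0 : 0 \in diffset X by rewrite -(subrr a) mem_diffset.
rewrite /energy (big_fsetD1 0 X0) /= delta0 lerDl.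
by apply: sumr_ge0 => x _; apply: powR_ge0.
Qed.

Lemma powR_le_halve k (x : R) : 0 <= k <= 2 -> 0 <= x -> x `^ k <= 4 * (x / 2) `^ k.
Proof.
case/andP=> k0 k2 x0.
have -> : x `^ k = 2 `^ k * (x / 2) `^ k.
  by rewrite -powRM ?divr_ge0 // mulrC divfK ?pnatr_eq0.
apply: ler_wpM2r; first exact: powR_ge0.
apply: le_trans (_ : 2 `^ k <= 2 `^ 2) _; first by apply: ler_powR; rewrite ?ler1n.
by rewrite powR_mulrn // expr2; lra.
Qed.

Lemma energy_le_half_card k X Y : 0 <= k <= 2 -> (0 < #|` X|)%N ->
  (#|` X|)%:R / 2 <= (#|` Y|)%:R :> R ->
  energy k X <= 4 * (#|` X|)%:R ^+ 2 * energy k Y.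
Proof.
move=> /[dup] kk /andP[k0 _] X0 hB; set n := (#|` X|)%:R.
have n2 : 0 < n / 2 by rewrite divr_gt0 ?ltr0n.
have Y0 : (0 < #|` Y|)%N by rewrite -(ltr0n R); apply: lt_le_trans hB.
apply: le_trans (energy_le_card X k0) _.
have -> : 4 * n ^+ 2 * energy k Y = n ^+ 2 * (4 * energy k Y) by ring.
apply: ler_wpM2l; first exact: sqr_ge0.
apply: le_trans (powR_le_halve kk (ler0n _ _)) _.
apply: ler_wpM2l => //; apply: le_trans (card_le_energy k Y0).
by apply: ge0_ler_powR; rewrite ?nnegrE ?(ltW n2).
Qed.

End Energy.

(** * Rich sets: part (1) *)

Section RichSet.
Variable R : realType.
Implicit Types (A X P : {fset R}) (x : R).

Lemma rich_sub A X : rich A X `<=` X.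
Proof. by apply/fsubsetP => x; rewrite inE => /andP[]. Qed.

Lemma card_translate X x : #|` translate X x| = #|` X|.
Proof. by rewrite card_imfset //= => a b /addIr. Qed.

Lemma natr_card_translateI X P x :
  (#|` translate X x `&` P|)%:R = \sum_(b <- X) (b + x \in P)%:R :> R.
Proof.
rewrite (natr_card_fsubset (fsubsetIl _ _)).
rewrite (eq_big_seq (fun y => (y \in P)%:R)); last by move=> y yT; rewrite in_fsetI yT.
by rewrite big_imfset //= => a b _ _ /addIr.
Qed.

Lemma sum_unpopular_pairs A X : 0 < ln (#|` A|)%:R :> R ->
  \sum_(x <- X) \sum_(b <- X) (x + b \notin popular A X)%:R
    <= (#|` X|)%:R ^+ 2 / (8 * ln (#|` A|)%:R) :> R.
Proof.
move=> L0; set L := ln _; set n := (#|` X|)%:R; set S := sumset X.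
set thr := n ^+ 2 / (8 * (#|` S|)%:R * L).
have thr0 : 0 <= thr by rewrite divr_ge0 ?sqr_ge0 ?mulr_ge0 ?(ltW L0).
rewrite (sum_pairs_sumset X (fun y => (y \notin popular A X)%:R)).
apply: le_trans (_ : _ <= \sum_(y <- S) thr) _.
  apply: ler_sum_seq => y yS.
  have [_|] := boolP (y \in popular A X); first by rewrite mulr0.
  by rewrite !inE yS mulr1 /= -ltNge => /ltW.
have -> : \sum_(y <- S) thr = (#|` S|)%:R * thr.
  by rewrite natr_card mulr_suml; under [RHS]eq_bigr do rewrite mul1r.
have [->|S0] := eqVneq #|` S| 0%N; first by rewrite mul0r divr_ge0 ?sqr_ge0 ?mulr_ge0 ?(ltW L0).
suff -> : (#|` S|)%:R * thr = n ^+ 2 / (8 * L) by [].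
by rewrite /thr; field; rewrite pnatr_eq0 S0 gt_eqF.
Qed.

Lemma nonrich_unpopular_pairs A X :
  ((#|` X|)%:R - (#|` rich A X|)%:R) * ((#|` X|)%:R / 4)
    <= \sum_(x <- X) \sum_(b <- X) (x + b \notin popular A X)%:R :> R.
Proof.
set n := (#|` X|)%:R.
have -> : n - (#|` rich A X|)%:R = \sum_(x <- X) (x \notin rich A X)%:R.
  rewrite /n natr_card (natr_card_fsubset (rich_sub A X)) -sumrB.
  by apply: eq_bigr => x _; rewrite natr_negb.
rewrite mulr_suml; apply: ler_sum_seq => x xX.
have -> : \sum_(b <- X) (x + b \notin popular A X)%:R =
    n - (#|` translate X x `&` popular A X|)%:R.
  rewrite natr_card_translateI /n natr_card -sumrB.
  by apply: eq_bigr => b _; rewrite addrC natr_negb.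
have [_|] := boolP (x \in rich A X).
  by rewrite mul0r subr_ge0 ler_nat -(card_translate X x) fsubset_leq_card ?fsubsetIl.
rewrite !inE xX /= -ltNge mul1r; lra.
Qed.

Lemma rich_card_loss A X : 0 < ln (#|` A|)%:R :> R ->
  2 * ln (#|` A|)%:R * ((#|` X|)%:R - (#|` rich A X|)%:R) <= (#|` X|)%:R :> R.
Proof.
move=> L0; have := le_trans (nonrich_unpopular_pairs A X) (sum_unpopular_pairs X L0).
set L := ln _; set n := (#|` X|)%:R; set r := (#|` rich A X|)%:R => H.
have [n0|n0] := eqVneq n 0.
  move: n0 (fsubset_leq_card (rich_sub A X)); rewrite /n /r => /eqP.
  rewrite pnatr_eq0 => /eqP ->.
  by rewrite leqn0 => /eqP ->; rewrite subrr mulr0.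
have key : n * (2 * L * (n - r)) <= n * n.
  have -> : n * (2 * L * (n - r)) = 8 * L * ((n - r) * (n / 4)) by field.
  have -> : n * n = 8 * L * (n ^+ 2 / (8 * L)) by field; rewrite gt_eqF.
  by rewrite ler_pM2l ?mulr_gt0.
by rewrite ler_pM2l ?lt_def ?n0 ?ler0n in key.
Qed.

End RichSet.

Section RichIteration.
Variable R : realType.
Implicit Types (A : {fset R}) (k : R).

Definition rich_iter A i := iter i (rich A) A.

Lemma rich_iterS A i : rich_iter A i.+1 = rich A (rich_iter A i).
Proof. by []. Qed.

Lemma rich_iter_sub A i : rich_iter A i `<=` A.
Proof.
elim: i => [|i IH]; first exact: fsubset_refl.
by rewrite rich_iterS; apply: fsubset_trans (rich_sub _ _) IH.
Qed.

Lemma rich_iter_card_loss A i : 0 < ln (#|` A|)%:R :> R ->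
  2 * ln (#|` A|)%:R * ((#|` A|)%:R - (#|` rich_iter A i|)%:R)
    <= i%:R * (#|` A|)%:R :> R.
Proof.
move=> L0; elim: i => [|i IH]; first by rewrite subrr mulr0 mul0r.
have loss := rich_card_loss (rich_iter A i) L0.
have le_n : (#|` rich_iter A i|)%:R <= (#|` A|)%:R :> R.
  by rewrite ler_nat fsubset_leq_card ?rich_iter_sub.
rewrite rich_iterS -natr1; move: loss IH le_n.
set L := ln _; set a := (#|` A|)%:R; set b := (#|` rich_iter A i|)%:R.
set c := (#|` rich A _|)%:R.
have -> : 2 * L * (a - c) = 2 * L * (a - b) + 2 * L * (b - c) by ring.
lra.
Qed.

Lemma rich_iter_card_half A i : 0 < ln (#|` A|)%:R :> R -> i%:R <= ln (#|` A|)%:R :> R ->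
  (#|` A|)%:R / 2 <= (#|` rich_iter A i|)%:R :> R.
Proof.
move=> L0 iL; move: (rich_iter_card_loss i L0).
set L := ln _; set n := (#|` A|)%:R; set b := (#|` rich_iter A i|)%:R => loss.
have : 2 * (n - b) * L <= n * L.
  rewrite mulrAC; apply: le_trans loss _; rewrite [n * L]mulrC.
  by apply: ler_wpM2r; [apply: ler0n | exact: iL].
by rewrite ler_pM2r //; lra.
Qed.

Lemma rich_iter_energy k A j : 0 < ln (#|` A|)%:R :> R ->
  (exists2 i, (i < j)%N &
     energy k (rich_iter A i) / ln (#|` A|)%:R <= energy k (rich A (rich_iter A i)))
  \/ energy k (rich_iter A j) * ln (#|` A|)%:R ^+ j <= energy k A.
Proof.
move=> L0; elim: j => [|j [[i ij Hi]|IH]].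
- by right; rewrite expr0 mulr1.
- by left; exists i => //; apply: ltnW.
- have [H|H] := leP (energy k (rich_iter A j) / ln (#|` A|)%:R)
                    (energy k (rich A (rich_iter A j))); first by left; exists j.
  right; apply: le_trans IH; rewrite rich_iterS exprS mulrA.
  apply: ler_wpM2r; first by rewrite exprn_ge0 ?(ltW L0).
  by rewrite -ler_pdivlMr // ltW.
Qed.

End RichIteration.

Lemma sqr_lt_pow_of_ln_lt (R : realType) (L n : R) (j : nat) :
  (3 <= j)%N -> expR 4 <= L -> 0 < n -> ln n < j.+1%:R -> 4 * n ^+ 2 < L ^+ j.
Proof.
move=> j3 L4 n0 lnj; have jR : 3 <= j%:R :> R by rewrite (ler_nat R 3 j).
have n2 : n ^+ 2 < expR j.+1%:R ^+ 2.
  by rewrite ltr_pXn2r ?nnegrE ?expR_ge0 ?(ltW n0) // -[n]lnK ?posrE // ltr_expR.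
have e4j : 4 * expR j.+1%:R ^+ 2 <= expR 4 ^+ j :> R.
  rewrite -!expRM_natl.
  have -> : j%:R * 4 = 2%:R * j.+1%:R + (2 * j%:R - 2) :> R by rewrite -natr1; ring.
  rewrite expRD mulrC; apply: ler_wpM2l; first exact: expR_ge0.
  by apply: le_trans (expR_ge1Dx _); lra.
have L4j : expR 4 ^+ j <= L ^+ j by rewrite lerXn2r ?nnegrE ?expR_ge0 ?(le_trans (expR_ge0 _) L4).
by apply: lt_le_trans L4j; apply: lt_le_trans e4j; rewrite ltr_pM2l.
Qed.

Theorem exists_rich_energy_subset (R : realType) (k : R) : 0 <= k <= 2 ->
  exists N : nat, forall A : {fset R}, (N <= #|` A|)%N ->
    exists B : {fset R}, [/\ B `<=` A, (#|` A|)%:R / 2 <= (#|` B|)%:R :> R &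
      energy k B / ln (#|` A|)%:R <= energy k (rich A B)].
Proof.
(* The threshold gives ln|A| > e^4, so that (ln|A|)^(trunc ln|A|) > 4 |A|^2. *)
move=> kk; exists (Num.truncn (expR (expR 4) : R)).+1 => A HA.
set n := (#|` A|)%:R : R; set L := ln n.
have nbig : expR (expR 4) < n by apply: lt_le_trans (truncnS_gt _) _; rewrite ler_nat.
have n0 : 0 < n by apply: lt_trans nbig; apply: expR_gt0.
have Lbig : expR 4 < L by rewrite -[X in X < _]expRK ltr_ln // posrE expR_gt0.
have L0 : 0 < L by apply: lt_trans Lbig; apply: expR_gt0.
set j := Num.truncn L.
have /andP[jL Lj] : j%:R <= L < j.+1%:R by apply: truncn_itv; apply: ltW.
have half i : (i <= j)%N -> n / 2 <= (#|` rich_iter A i|)%:R.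
  by move=> ij; apply: rich_iter_card_half L0 _; apply: le_trans jL; rewrite ler_nat.
have [[i ij Hi]|decay] := rich_iter_energy k j L0.
  by exists (rich_iter A i); split; [apply: rich_iter_sub | apply/half/ltnW |].
exfalso.
have j3 : (3 <= j)%N.
  rewrite /j truncn_ge_nat ?(ltW L0) //; apply: le_trans (ltW Lbig).
  by apply: le_trans (expR_ge1Dx _); lra.
have A0 : (0 < #|` A|)%N by rewrite -(ltr0n R).
have Bj0 : (0 < #|` rich_iter A j|)%N.
  by rewrite -(ltr0n R); apply: lt_le_trans (half j (leqnn j)); apply: divr_gt0.
have EB0 : 0 < energy k (rich_iter A j).
  by apply: lt_le_trans (card_le_energy k Bj0); rewrite powR_gt0 ?ltr0n.
have := le_trans decay (energy_le_half_card kk A0 (half j (leqnn j))).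
rewrite mulrC ler_pM2r //; apply/negP; rewrite -ltNge.
exact: sqr_lt_pow_of_ln_lt j3 (ltW Lbig) n0 Lj.
Qed.

(** * Popular triples and dyadic pigeonholing: part (2) *)

Lemma sum_sqr_gram_swap (R : comPzRingType) (I J : Type) (s : seq I) (t : seq J)
    (g : I -> J -> R) :
  \sum_(i1 <- s) \sum_(i2 <- s) (\sum_(j <- t) g i1 j * g i2 j) ^+ 2 =
  \sum_(j1 <- t) \sum_(j2 <- t) (\sum_(i <- s) g i j1 * g i j2) ^+ 2.
Proof.
have expand (u v : seq _) (h : _ -> _ -> _) :
    \sum_(x1 <- u) \sum_(x2 <- u) (\sum_(y <- v) h x1 y * h x2 y) ^+ 2 =
    \sum_(x1 <- u) \sum_(x2 <- u) \sum_(y1 <- v) \sum_(y2 <- v)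
      h x1 y1 * h x2 y1 * (h x1 y2 * h x2 y2) :> R.
  apply: eq_bigr => x1 _; apply: eq_bigr => x2 _.
  by rewrite expr2 mulr_suml; apply: eq_bigr => y1 _; rewrite mulr_sumr.
rewrite !expand; under eq_bigr do rewrite exchange_big.
rewrite exchange_big; apply: eq_bigr => j1 _.
under eq_bigr do rewrite exchange_big.
rewrite exchange_big; apply: eq_bigr => j2 _.
by apply: eq_bigr => i1 _; apply: eq_bigr => i2 _; ring.
Qed.

Lemma cauchy_schwarz (R : realDomainType) (I : Type) (r : seq I) (a b : I -> R) :
  (\sum_(i <- r) a i * b i) ^+ 2 <= (\sum_(i <- r) a i ^+ 2) * (\sum_(i <- r) b i ^+ 2).
Proof.
have double (f g : I -> R) :
    (\sum_(i <- r) f i) * (\sum_(j <- r) g j) = \sum_(i <- r) \sum_(j <- r) f i * g j.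
  by rewrite mulr_suml; apply: eq_bigr => i _; rewrite mulr_sumr.
have lagrange : \sum_(i <- r) \sum_(j <- r) (a i * b j - a j * b i) ^+ 2 =
    (\sum_(i <- r) a i ^+ 2) * (\sum_(i <- r) b i ^+ 2)
  + (\sum_(i <- r) b i ^+ 2) * (\sum_(i <- r) a i ^+ 2)
  - 2 * ((\sum_(i <- r) a i * b i) * (\sum_(i <- r) a i * b i)).
  rewrite !double mulr_sumr -!big_split -sumrB /=; apply: eq_bigr => i _.
  rewrite mulr_sumr -!big_split -sumrB /=; apply: eq_bigr => j _; ring.
have : 0 <= \sum_(i <- r) \sum_(j <- r) (a i * b j - a j * b i) ^+ 2.
  by apply: sumr_ge0 => i _; apply: sumr_ge0 => j _; apply: sqr_ge0.
rewrite lagrange [_ * (\sum_(i <- r) a i ^+ 2)]mulrC expr2; lra.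
Qed.

Lemma cauchy_schwarz_pairs (R : realDomainType) (I J : Type) (r : seq I) (t : seq J)
    (a b : I -> J -> R) :
  (\sum_(i <- r) \sum_(j <- t) a i j * b i j) ^+ 2 <=
  (\sum_(i <- r) \sum_(j <- t) a i j ^+ 2) * (\sum_(i <- r) \sum_(j <- t) b i j ^+ 2).
Proof.
have := cauchy_schwarz [seq (i, j) | i <- r, j <- t] (fun q => a q.1 q.2) (fun q => b q.1 q.2).
by rewrite !big_allpairs.
Qed.

Section PopularTriples.
Variable R : realType.
Implicit Types (A B X P Q : {fset R}) (b x D : R).

Lemma sum_fset_shift P X b (F : R -> R) :
  \sum_(p <- P) (p - b \in X)%:R * F p = \sum_(r <- X) (b + r \in P)%:R * F (b + r).
Proof.
transitivity (\sum_(p <- P) \sum_(r <- X) (b + r == p)%:R * F p).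
  apply: eq_bigr => p _; rewrite -big_indicator_mem ?fset_uniq // mulr_suml.
  apply: eq_bigr => r _; rewrite (_ : (p - b == r) = (b + r == p)) //.
  by apply/eqP/eqP => <-; ring.
by rewrite exchange_big; apply: eq_bigr => r _; rewrite big_indicator_eq ?fset_uniq.
Qed.

Lemma common_shifts_le_delta P X b b' :
  \sum_(p <- P) (p - b \in X)%:R * (p - b' \in X)%:R <= (delta X (b - b'))%:R :> R.
Proof.
rewrite sum_fset_shift natr_delta_col; apply: ler_sum => r _.
rewrite (_ : b + r - b' = r + (b - b')); last by ring.
by rewrite ler_piMl ?natr_bool_le1.
Qed.

Lemma sum_sqr_common_shifts_le_energy3 P X :
  \sum_(p1 <- P) \sum_(p2 <- P)
    (\sum_(b <- X) (p1 - b \in X)%:R * (p2 - b \in X)%:R) ^+ 2 <= energy 3 X.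
Proof.
rewrite (sum_sqr_gram_swap P X (fun p b => (p - b \in X)%:R)).
apply: le_trans (_ : _ <= \sum_(b <- X) \sum_(b' <- X) (delta X (b - b'))%:R ^+ 2) _.
  apply: ler_sum => b _; apply: ler_sum => b' _.
  rewrite lerXn2r ?nnegrE ?ler0n ?common_shifts_le_delta //.
  by apply: sumr_ge0 => p _; apply: mulr_ge0.
rewrite (sum_pairs_diffset X (fun x => (delta X x)%:R ^+ 2)).
by apply: ler_sum => x _; rewrite powR_mulrn ?ler0n // exprS.
Qed.

Lemma rich_common_popular_shifts A B r1 r2 : r1 \in rich A B -> r2 \in rich A B ->
  (#|` B|)%:R / 2
    <= \sum_(b <- B) (b + r1 \in popular A B)%:R * (b + r2 \in popular A B)%:R :> R.
Proof.
rewrite !inE => /andP[_ h1] /andP[_ h2]; rewrite !natr_card_translateI in h1 h2.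
apply: le_trans (_ : _ <= \sum_(b <- B)
  ((b + r1 \in popular A B)%:R + (b + r2 \in popular A B)%:R - 1)) _.
  by rewrite sumrB big_split /= -natr_card; lra.
apply: ler_sum => b _.
by case: (b + r1 \in _); case: (b + r2 \in _); rewrite /= ?mulr1 ?mulr0 ?mul0r; lra.
Qed.

Lemma in_Pdelta X D x : (x \in Pdelta X D) =
  [&& x \in diffset X, D <= (delta X x)%:R & (delta X x)%:R < 2 * D].
Proof. by rewrite !inE. Qed.

Lemma Pdelta_sub X D : Pdelta X D `<=` diffset X.
Proof. by apply/fsubsetP => x; rewrite in_Pdelta => /andP[]. Qed.

Lemma sum_pairs_Pdelta X D :
  D * (#|` Pdelta X D|)%:R <= \sum_(r1 <- X) \sum_(r2 <- X) (r1 - r2 \in Pdelta X D)%:R.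
Proof.
rewrite (sum_pairs_diffset X (fun x => (x \in Pdelta X D)%:R)).
rewrite (natr_card_fsubset (Pdelta_sub X D)) mulr_sumr; apply: ler_sum => x _.
by have [|] := boolP (x \in Pdelta X D); rewrite ?mulr0 ?mulr1 // in_Pdelta => /and3P[].
Qed.

(* Both sides count the (b, r1, r2) in B * X * X with b + r1, b + r2 in P and
   r1 - r2 in Q; the left one is indexed by p_i = b + r_i. *)
Lemma sum_shift_pairsE B X P Q :
  \sum_(p1 <- P) \sum_(p2 <- P) (p1 - p2 \in Q)%:R *
      \sum_(b <- B) (p1 - b \in X)%:R * (p2 - b \in X)%:R
  = \sum_(r1 <- X) \sum_(r2 <- X) (r1 - r2 \in Q)%:R *
      \sum_(b <- B) (b + r1 \in P)%:R * (b + r2 \in P)%:R :> R.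
Proof.
have inner b p1 : \sum_(p2 <- P) (p2 - b \in X)%:R * (p1 - p2 \in Q)%:R =
    \sum_(r2 <- X) (b + r2 \in P)%:R * (p1 - (b + r2) \in Q)%:R :> R.
  exact: (sum_fset_shift P X b (fun p2 => (p1 - p2 \in Q)%:R)).
transitivity (\sum_(b <- B) \sum_(p1 <- P) (p1 - b \in X)%:R *
    \sum_(p2 <- P) (p2 - b \in X)%:R * (p1 - p2 \in Q)%:R : R).
  under eq_bigr do under eq_bigr do rewrite mulr_sumr.
  under eq_bigr do rewrite exchange_big.
  rewrite exchange_big; apply: eq_bigr => b _; apply: eq_bigr => p1 _.
  by rewrite mulr_sumr; apply: eq_bigr => p2 _; ring.
under eq_bigr do under eq_bigr do rewrite inner.
under eq_bigr do rewrite (sum_fset_shift P X _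
  (fun p1 => \sum_(r2 <- X) (_ + r2 \in P)%:R * (p1 - (_ + r2) \in Q)%:R)).
rewrite exchange_big; apply: eq_bigr => r1 _.
under eq_bigr do rewrite mulr_sumr.
rewrite exchange_big; apply: eq_bigr => r2 _; rewrite mulr_sumr.
apply: eq_bigr => b _; rewrite (_ : b + r1 - (b + r2) = r1 - r2); last by ring.
by ring.
Qed.

Lemma sqr_sum_shift_pairs_le B X P Q : X `<=` B ->
  (\sum_(p1 <- P) \sum_(p2 <- P) (p1 - p2 \in Q)%:R *
      \sum_(b <- B) (p1 - b \in X)%:R * (p2 - b \in X)%:R) ^+ 2
  <= (triples P Q)%:R * energy 3 B.
Proof.
move=> XB; apply: le_trans (cauchy_schwarz_pairs _ _ _ _) _; apply: ler_pM.
- by apply: sumr_ge0 => p1 _; apply: sumr_ge0 => p2 _; apply: sqr_ge0.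
- by apply: sumr_ge0 => p1 _; apply: sumr_ge0 => p2 _; apply: sqr_ge0.
- rewrite natr_triples; apply: ler_sum => p1 _; apply: ler_sum => p2 _.
  by case: (_ \in Q); rewrite ?expr1n ?expr0n.
apply: le_trans (sum_sqr_common_shifts_le_energy3 P B).
apply: ler_sum => p1 _; apply: ler_sum => p2 _.
have shifts_ge0 Y : 0 <= \sum_(b <- B) (p1 - b \in Y)%:R * (p2 - b \in Y)%:R :> R.
  by apply: sumr_ge0 => b _; apply: mulr_ge0.
have shiftsS : \sum_(b <- B) (p1 - b \in X)%:R * (p2 - b \in X)%:R
    <= \sum_(b <- B) (p1 - b \in B)%:R * (p2 - b \in B)%:R :> R.
  by apply: ler_sum => b _; apply: ler_pM; rewrite ?ler_natr_mem.
by rewrite !expr2; apply: ler_pM; rewrite ?shifts_ge0.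
Qed.

Lemma popular_shift_pairs_ge A B D :
  (#|` B|)%:R / 2 * (D * (#|` Pdelta (rich A B) D|)%:R) <=
  \sum_(p1 <- popular A B) \sum_(p2 <- popular A B) (p1 - p2 \in Pdelta (rich A B) D)%:R *
      \sum_(b <- B) (p1 - b \in rich A B)%:R * (p2 - b \in rich A B)%:R.
Proof.
rewrite sum_shift_pairsE.
apply: le_trans (ler_wpM2l _ (sum_pairs_Pdelta _ D)) _; first by rewrite divr_ge0.
rewrite mulr_sumr; apply: ler_sum_seq => r1 r1R; rewrite mulr_sumr.
apply: ler_sum_seq => r2 r2R; rewrite mulrC; apply: ler_wpM2l => //.
exact: rich_common_popular_shifts.
Qed.

Lemma popular_triples_bound A B D : 0 <= D ->
  D ^+ 2 * (#|` Pdelta (rich A B) D|)%:R ^+ 2 * (#|` B|)%:R ^+ 2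
    <= 4 * (energy 3 B * (triples (popular A B) (Pdelta (rich A B) D))%:R) :> R.
Proof.
move=> D0; set PD := Pdelta _ D; set n := (#|` B|)%:R.
have lower := popular_shift_pairs_ge A B D; rewrite -/PD -/n in lower.
have upper := sqr_sum_shift_pairs_le (popular A B) PD (rich_sub A B).
have -> : D ^+ 2 * (#|` PD|)%:R ^+ 2 * n ^+ 2 = 4 * (n / 2 * (D * (#|` PD|)%:R)) ^+ 2.
  by field.
rewrite [_ * (triples _ _)%:R]mulrC ler_pM2l //; apply: le_trans upper.
have lower0 : 0 <= n / 2 * (D * (#|` PD|)%:R) by rewrite !mulr_ge0 ?ler0n ?invr_ge0.
by rewrite !expr2; apply: ler_pM.
Qed.

End PopularTriples.

Lemma exists_sum_le_size_mul (R : realDomainType) (I : eqType) (s : seq I) (F : I -> R) :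
  s != [::] -> exists2 i, i \in s & \sum_(j <- s) F j <= (size s)%:R * F i.
Proof.
elim: s => [//|a s IH] _.
have [->|/IH [i si Hi]] := eqVneq s [::].
  by exists a; rewrite ?mem_seq1 // big_seq1 mul1r.
have split_head i0 : \sum_(j <- a :: s) F j <= (size (a :: s))%:R * F i0 =
    (F a + \sum_(j <- s) F j <= F i0 + (size s)%:R * F i0).
  by rewrite big_cons /= -add1n natrD mulrDl mul1r.
have [Fai|Fia] := leP (F a) (F i).
  by exists i; [rewrite in_cons si orbT | rewrite split_head lerD].
exists a; first exact: mem_head.
rewrite split_head lerD //; apply: le_trans Hi _.
by apply: ler_wpM2l; rewrite ?ler0n ?ltW.
Qed.

Section DyadicPigeonhole.
Variable R : realType.
Implicit Types (X : {fset R}) (k D : R).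

Lemma Pdelta_energy_le k X D : 0 <= k -> 0 <= D ->
  D `^ k * (#|` Pdelta X D|)%:R <= energy k X.
Proof.
move=> k0 D0; rewrite (natr_card_fsubset (Pdelta_sub X D)) mulr_sumr /energy.
apply: ler_sum => x _; have [xP|_] := boolP (x \in Pdelta X D); last by rewrite mulr0 powR_ge0.
rewrite mulr1; apply: ge0_ler_powR; rewrite ?nnegrE ?ler0n //.
by move: xP; rewrite in_Pdelta => /and3P[].
Qed.

Lemma dyadic_level_energy_le k X i : 0 <= k <= 2 ->
  \sum_(x <- diffset X) (trunc_log 2 (delta X x) == i)%:R * (delta X x)%:R `^ k
    <= 4 * ((2 ^ i)%:R `^ k * (#|` Pdelta X (2 ^ i)%:R|)%:R).
Proof.
move=> /[dup] kk /andP[k0 _].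
rewrite (natr_card_fsubset (Pdelta_sub X _)) !mulr_sumr; apply: ler_sum_seq => x xX.
have [/eqP ji|_] := boolP (trunc_log 2 (delta X x) == i); last first.
  by rewrite mul0r !mulr_ge0 ?powR_ge0.
have lo : (2 ^ i <= delta X x)%N by rewrite -ji trunc_logP ?delta_gt0.
have hi : (delta X x < 2 ^ i.+1)%N by rewrite -ji trunc_log_ltn.
have -> : x \in Pdelta X (2 ^ i)%:R.
  by rewrite in_Pdelta xX ler_nat lo /= -natrM -expnS ltr_nat.
rewrite mul1r mulr1; apply: le_trans (powR_le_halve kk (ler0n _ _)) _.
apply: ler_wpM2l => //; apply: ge0_ler_powR; rewrite ?nnegrE ?divr_ge0 ?ler0n //.
by rewrite ler_pdivrMr // -natrM -expnSr ler_nat ltnW.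
Qed.

Lemma energy_dyadic_split k X N : (#|` X| <= N)%N ->
  energy k X = \sum_(0 <= i < (trunc_log 2 N).+1)
    \sum_(x <- diffset X) (trunc_log 2 (delta X x) == i)%:R * (delta X x)%:R `^ k.
Proof.
move=> XN; rewrite exchange_big /energy; apply: eq_big_seq => x xX.
rewrite big_indicator_eq ?iota_uniq // mem_index_iota ltnS leq_trunc_log ?mul1r //.
exact: leq_trans (delta_le_card X x) XN.
Qed.

Lemma energy_dyadic_pigeonhole k X N : 0 <= k <= 2 -> (#|` X| <= N)%N ->
  exists2 D, 0 < D &
    energy k X <= 4 * (trunc_log 2 N).+1%:R * (D `^ k * (#|` Pdelta X D|)%:R).
Proof.
move=> kk XN; set m := (trunc_log 2 N).+1.
pose g i := (2 ^ i)%:R `^ k * (#|` Pdelta X (2 ^ i)%:R|)%:R.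
have [|i _ Hi] := @exists_sum_le_size_mul _ _ (index_iota 0 m) g.
  by rewrite /index_iota subn0.
exists (2 ^ i)%:R; first by rewrite ltr0n expn_gt0.
rewrite (energy_dyadic_split k XN).
apply: le_trans (_ : _ <= \sum_(0 <= j < m) 4 * g j) _.
  by apply: ler_sum => j _; apply: dyadic_level_energy_le.
rewrite -mulr_sumr -mulrA; apply: ler_wpM2l => //.
by rewrite /index_iota size_iota subn0 in Hi.
Qed.

End DyadicPigeonhole.

Lemma ln_natr_ge1 (R : realType) (n : nat) :
  (Num.truncn (expR 1 : R) < n)%N -> 1 <= ln (n%:R : R).
Proof.
move=> en; rewrite -[leLHS](expRK (1 : R)) ler_ln ?posrE ?expR_gt0 //.
  by apply: ltW; apply: lt_le_trans (truncnS_gt _) _; rewrite ler_nat.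
by rewrite ltr0n; apply: leq_ltn_trans en.
Qed.

Lemma trunc_log2_le_ln (R : realType) (n : nat) : (0 < n)%N -> 1 <= ln (n%:R : R) ->
  (trunc_log 2 n).+1%:R <= (1 + (ln (2 : R))^-1) * ln (n%:R : R).
Proof.
move=> n0 L1; have l2 : 0 < ln (2 : R) by rewrite ln_gt0 ?ltr1n.
have hm : (trunc_log 2 n)%:R * ln (2 : R) <= ln (n%:R : R).
  rewrite mulr_natl -lnXn // -natrX ler_ln ?posrE ?ltr0n ?expn_gt0 // ler_nat.
  exact: trunc_logP.
rewrite -natr1 mulrDl mul1r addrC; apply: lerD => //.
by rewrite mulrC ler_pdivlMr.
Qed.

Theorem lemma1p7 (R : realType) :
  (* (1) *)
  (exists N : nat, forall A : {fset R}, (N <= #|` A|)%N ->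
     exists B : {fset R}, [/\ B `<=` A,
       (#|` A|)%:R / 2 <= (#|` B|)%:R :> R &
       energy (12 / 7) B / ln (#|` A|)%:R <= energy (12 / 7) (rich A B)])
  /\
  (* (2) : absolute constants K, c (for ~ and <<), threshold N *)
  (exists (K c : R) (N : nat), [/\ 0 < K, 0 <= c &
     forall A B : {fset R}, (N <= #|` A|)%N -> B `<=` A ->
       (#|` A|)%:R / 2 <= (#|` B|)%:R :> R ->
       energy (12 / 7) B / ln (#|` A|)%:R <= energy (12 / 7) (rich A B) ->
       exists D : R, 0 < D /\
         let L := ln (#|` A|)%:R `^ c in
         let RB := rich A B in
         let PD := Pdelta RB D in
         [/\ D `^ (12 / 7) * (#|` PD|)%:R <= K * L * energy (12 / 7) RB,
             energy (12 / 7) RB <= K * L * (D `^ (12 / 7) * (#|` PD|)%:R),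
             energy (12 / 7) RB <= K * L * energy (12 / 7) B,
             energy (12 / 7) B <= K * L * energy (12 / 7) RB &
             D ^+ 2 * (#|` PD|)%:R ^+ 2 * (#|` B|)%:R ^+ 2
               <= K * (energy 3 B * (triples (popular A B) PD)%:R)]]).
Proof.
have k0 : 0 <= 12 / 7 :> R by rewrite divr_ge0 ?ler0n.
have kk : 0 <= (12 / 7 : R) <= 2 by rewrite k0 ler_pdivrMr ?ltr0n // -natrM ler_nat.
split; first exact: exists_rich_energy_subset.
(* 4 absorbs the dyadic rounding of delta^(12/7), and (1 + 1/ln 2) ln|A| bounds the
   number of dyadic ranges. *)
set C : R := 4 * (1 + (ln (2 : R))^-1).
have C4 : 4 <= C by rewrite ler_peMr // lerDl invr_ge0 ln_ge0 ?ler1n.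
exists C, 1, (Num.truncn (expR 1 : R)).+1; split => //; first exact: lt_le_trans C4.
move=> A B HA BA _ hE; have L1 := ln_natr_ge1 HA.
have A0 : (0 < #|` A|)%N by apply: leq_trans HA.
have CL1 : 1 <= C * ln (#|` A|)%:R.
  by rewrite -[leLHS]mulr1; apply: ler_pM => //; apply: le_trans C4; rewrite ler1n.
have RA : (#|` rich A B| <= #|` A|)%N.
  by rewrite fsubset_leq_card // (fsubset_trans (rich_sub A B) BA).
have [D D0 Dhi] := energy_dyadic_pigeonhole kk RA.
exists D; split => //; rewrite powRr1 ?(le_trans ler01 L1) //; split.
- apply: le_trans (ler_peMl (energy_ge0 _ _) CL1).
  exact: Pdelta_energy_le k0 (ltW D0).
- apply: le_trans Dhi _; apply: ler_wpM2r; first by rewrite mulr_ge0 ?powR_ge0.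
  by rewrite /C -mulrA; apply: ler_wpM2l => //; apply: trunc_log2_le_ln.
- exact: le_trans (le_energy k0 (rich_sub A B)) (ler_peMl (energy_ge0 _ _) CL1).
- rewrite ler_pdivrMr ?(lt_le_trans ltr01 L1) // in hE.
  apply: le_trans hE _; rewrite mulrC; apply: ler_wpM2r; first exact: energy_ge0.
  by apply: ler_peMl; [apply: le_trans L1 | apply: le_trans C4; rewrite ler1n].
- apply: le_trans (popular_triples_bound A B (ltW D0)) _.
  by apply: ler_wpM2r => //; rewrite mulr_ge0 ?energy_ge0.
Qed.
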